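(* Let $A$ be a closed linear operator in a sequentially complete locally convex space $E$. Let $(\lambda_n)_{n\in\mathbb N}$ be a sequence in the resolvent set $\rho(A)$ with $\lim_{n\to\infty}|\lambda_n|=\infty$, and suppose there exist $C>0$ and $k\ge -1$ such that for every $p\in\circledast$ there exists $q\in\circledast$ with $$p(R(\lambda_n:A)x)\le C|\lambda_n|^k q(x)\quad\text{for all }x\in E,\ n\in\mathbb N.$$ Then $A$ is stationary dense and $n(A)\le k+2$.
   Context: $E$ is a Hausdorff sequentially complete locally convex space whose topology is given by a family $\circledast$ of continuous seminorms. $\rho(A)$ is the set of $\lambda\in\mathbb C$ for which $\lambda-A:D(A)\to E$ is bijective with continuous inverse $R(\lambda:A)=(\lambda-A)^{-1}$. $A$ is called stationary dense if $n(A):=\inf\{k\in\mathbb N_0:\ D(A^m)\subseteq\overline{D(A^{m+1})}\ \text{for all } m\ge k\}<\infty$. *)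

From Stdlib Require Import Reals List.
Open Scope R_scope.

Record Cx := mkC { Cre : R; Cim : R }.
Definition C0 : Cx := mkC 0 0.
Definition C1 : Cx := mkC 1 0.
Definition Cadd (a b : Cx) : Cx := mkC (Cre a + Cre b) (Cim a + Cim b).
Definition Cmul (a b : Cx) : Cx :=
  mkC (Cre a * Cre b - Cim a * Cim b) (Cre a * Cim b + Cim a * Cre b).
Definition Cnorm (a : Cx) : R := sqrt (Cre a ^ 2 + Cim a ^ 2).

Record LCS := {
  V :> Type;
  vadd : V -> V -> V;
  vzero : V;
  vopp : V -> V;
  vscal : Cx -> V -> V;
  vaddA : forall x y z, vadd x (vadd y z) = vadd (vadd x y) z;
  vaddC : forall x y, vadd x y = vadd y x;
  vadd0 : forall x, vadd x vzero = x;
  vaddN : forall x, vadd x (vopp x) = vzero;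
  vscalA : forall a b x, vscal a (vscal b x) = vscal (Cmul a b) x;
  vscal1 : forall x, vscal C1 x = x;
  vscalDr : forall a x y, vscal a (vadd x y) = vadd (vscal a x) (vscal a y);
  vscalDl : forall a b x, vscal (Cadd a b) x = vadd (vscal a x) (vscal b x);
  SI : Type;
  sn : SI -> V -> R;
  sn_triangle : forall i x y, sn i (vadd x y) <= sn i x + sn i y;
  sn_homog : forall i a x, sn i (vscal a x) = Cnorm a * sn i x;
  hausdorff : forall x, (forall i, sn i x = 0) -> x = vzero;
  seq_complete : forall u : nat -> V,
    (forall i eps, 0 < eps -> exists N, forall n m, (N <= n)%nat -> (N <= m)%nat ->
        sn i (vadd (u n) (vopp (u m))) < eps) ->
    exists x, forall i eps, 0 < eps -> exists N, forall n, (N <= n)%nat ->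
        sn i (vadd (u n) (vopp x)) < eps
}.

Arguments vadd {_}. Arguments vzero {_}. Arguments vopp {_}.
Arguments vscal {_}. Arguments sn {_}.

Section Ops.
Variable E : LCS.

Definition vsub (x y : E) : E := vadd x (vopp y).

Definition in_closure (S : E -> Prop) (x : E) : Prop :=
  forall (L : list (SI E)) (eps : R), 0 < eps ->
    exists y, S y /\ forall i, In i L -> sn i (vsub x y) < eps.

Definition continuous_map (f : E -> E) : Prop :=
  forall (x : E) (i : SI E) (eps : R), 0 < eps ->
    exists (L : list (SI E)) (delta : R), 0 < delta /\
      forall y, (forall j, In j L -> sn j (vsub y x) < delta) ->
        sn i (vsub (f y) (f x)) < eps.

Definition linear_op (D : E -> Prop) (A : E -> E) : Prop :=
  D vzero /\
  (forall x y, D x -> D y -> D (vadd x y) /\ A (vadd x y) = vadd (A x) (A y)) /\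
  (forall a x, D x -> D (vscal a x) /\ A (vscal a x) = vscal a (A x)).

(** Closed operator: the graph is closed in E x E. *)
Definition closed_op (D : E -> Prop) (A : E -> E) : Prop :=
  forall x y : E,
    (forall (L : list (SI E)) (eps : R), 0 < eps ->
       exists z, D z /\ forall i, In i L ->
         sn i (vsub x z) < eps /\ sn i (vsub y (A z)) < eps) ->
    D x /\ A x = y.

Definition shift_op (A : E -> E) (lam : Cx) (x : E) : E := vsub (vscal lam x) (A x).

Definition is_resolvent (D : E -> Prop) (A : E -> E) (lam : Cx) (Rl : E -> E) : Prop :=
  (forall y, D (Rl y) /\ shift_op A lam (Rl y) = y) /\
  (forall x, D x -> Rl (shift_op A lam x) = x).

Definition in_resolvent_set (D : E -> Prop) (A : E -> E) (lam : Cx) : Prop :=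
  exists Rl, is_resolvent D A lam Rl /\ continuous_map Rl.

Fixpoint dom_pow (D : E -> Prop) (A : E -> E) (m : nat) : E -> Prop :=
  match m with
  | O => fun _ => True
  | S m' => fun x => D x /\ dom_pow D A m' (A x)
  end.

(** the defining property of the set whose infimum is n(A) *)
Definition stat_index (D : E -> Prop) (A : E -> E) (k : nat) : Prop :=
  forall m, (k <= m)%nat ->
    forall x, dom_pow D A m x -> in_closure (dom_pow D A (S m)) x.

Definition stationary_dense (D : E -> Prop) (A : E -> E) : Prop :=
  exists k, stat_index D A k.

(** n(A) <= r  (n(A) = inf {k | stat_index k}; the set is upward closed) *)
Definition n_le (D : E -> Prop) (A : E -> E) (r : R) : Prop :=
  exists k, stat_index D A k /\ INR k <= r.

End Ops.

(* For x in D(A^m) with m >= J + 1, where J is the least integer > k, the vectors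
   lam_n R(lam_n) x lie in D(A^(m+1)) and x - lam R(lam) x = - R(lam) A x.  Iterating
   lam R(lam) z = z + R(lam) A z along x, A x, ..., A^J x gives
   R(lam) A x = sum_(i=1..J) lam^-i A^i x + lam^-J R(lam) A^(J+1) x, whose seminorms
   are O(|lam|^-1) + O(|lam|^(k-J)) by the resolvent estimate, hence tend to 0.
   So D(A^m) lies in the closure of D(A^(m+1)) for all m >= J + 1, and J + 1 <= k + 2. *)
From Pilot Require Import Defs.
From Stdlib Require Import Reals ZArith Lra Lia List IndefiniteDescription.
Open Scope R_scope.

Definition Cm1 : Cx := mkC (-1) 0.

Lemma Cnorm_C0 : Cnorm C0 = 0.
Proof. unfold Cnorm, C0; cbn [Cre Cim]. replace (0 ^ 2 + 0 ^ 2) with 0 by ring. apply sqrt_0. Qed.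

Lemma Cnorm_Cm1 : Cnorm Cm1 = 1.
Proof.
  unfold Cnorm, Cm1; cbn [Cre Cim]. replace ((-1) ^ 2 + 0 ^ 2) with 1 by ring. apply sqrt_1.
Qed.

Section VectorAlgebra.
Variable E : LCS.
Implicit Types (x y z a b c : E).

Lemma vadd0l x : vadd vzero x = x.
Proof. rewrite vaddC; apply vadd0. Qed.

Lemma vadd_cancel_l a b c : vadd a b = vadd a c -> b = c.
Proof.
  intro H. rewrite <- (vadd0l b), <- (vadd0l c), <- (vaddN _ a), (vaddC _ a).
  rewrite <- !vaddA, H. reflexivity.
Qed.

Lemma vscal0 x : vscal C0 x = vzero.
Proof.
  apply (vadd_cancel_l (vscal C0 x)). rewrite vadd0, <- vscalDl.
  f_equal. unfold Cadd, C0; cbn. f_equal; ring.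
Qed.

Lemma vopp_scal x : vopp x = vscal Cm1 x.
Proof.
  apply (vadd_cancel_l x). rewrite vaddN, <- (vscal1 _ x) at 1.
  rewrite <- vscalDl, <- (vscal0 x). f_equal.
  unfold Cadd, Cm1, Defs.C1, C0; cbn. f_equal; ring.
Qed.

Lemma vopp_add x y : vopp (vadd x y) = vadd (vopp x) (vopp y).
Proof. rewrite !vopp_scal. apply vscalDr. Qed.

Lemma vsub_eq_add a b c : vsub E a b = c -> a = vadd c b.
Proof.
  unfold vsub. intros <-. rewrite <- vaddA, (vaddC _ (vopp b)), vaddN, vadd0.
  reflexivity.
Qed.

Lemma add_eq_vsub a b c : a = vadd c b -> c = vsub E a b.
Proof. unfold vsub. intros ->. rewrite <- vaddA, vaddN, vadd0. reflexivity. Qed.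

Lemma vsub_addr x y : vsub E x (vadd x y) = vopp y.
Proof. unfold vsub. rewrite vopp_add, vaddA, vaddN, vadd0l. reflexivity. Qed.

Lemma sn_opp i x : sn i (vopp x) = sn i x.
Proof. rewrite vopp_scal, sn_homog, Cnorm_Cm1. ring. Qed.

Lemma sn_nonneg i x : 0 <= sn i x.
Proof.
  assert (Hzero : sn i (@vzero E) = 0).
  { rewrite <- (vscal0 vzero), sn_homog, Cnorm_C0. ring. }
  pose proof (sn_triangle _ i x (vopp x)) as H.
  rewrite vaddN, sn_opp, Hzero in H. lra.
Qed.

End VectorAlgebra.

Section LinearOperator.
Variable E : LCS.
Variable D : E -> Prop.
Variable A : E -> E.

Lemma dom_pow_antimono m n x : (m <= n)%nat -> dom_pow E D A n x -> dom_pow E D A m x.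
Proof.
  revert n x. induction m as [|m IH]; intros [|n] x Hmn Hx; cbn in *; auto; try lia.
  destruct Hx as [Dx Hx]. split; [assumption|]. apply (IH n); [lia|assumption].
Qed.

Hypothesis HAlin : linear_op E D A.

Lemma lin_add x y : D x -> D y -> D (vadd x y) /\ A (vadd x y) = vadd (A x) (A y).
Proof. destruct HAlin as [_ [H _]]. auto. Qed.

Lemma lin_scal a x : D x -> D (vscal a x) /\ A (vscal a x) = vscal a (A x).
Proof. destruct HAlin as [_ [_ H]]. auto. Qed.

Lemma lin_sub x y : D x -> D y -> D (vsub E x y) /\ A (vsub E x y) = vsub E (A x) (A y).
Proof.
  intros Dx Dy. unfold vsub. rewrite !vopp_scal.
  destruct (lin_scal Cm1 y Dy) as [Dy' Ay']. rewrite <- Ay'. apply lin_add; assumption.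
Qed.

Lemma dom_pow_scal m a x : dom_pow E D A m x -> dom_pow E D A m (vscal a x).
Proof.
  revert x. induction m as [|m IH]; intros x Hx; cbn in *; auto.
  destruct Hx as [Dx Hx]. destruct (lin_scal a x Dx) as [Dax ->]. auto.
Qed.

Section Resolvent.
Variable lam : Cx.
Variable Rl : E -> E.
Hypothesis Hres : is_resolvent E D A lam Rl.

Lemma resolvent_eq z : vscal lam (Rl z) = vadd z (A (Rl z)).
Proof. apply vsub_eq_add, (proj2 (proj1 Hres z)). Qed.

Lemma resolvent_commute z : D z -> Rl (A z) = A (Rl z).
Proof.
  intro Dz. destruct Hres as [Hright Hleft]. destruct (Hright z) as [Dw Hw].
  set (w := Rl z) in *.
  assert (HAw : A w = vsub E (vscal lam w) z).
  { apply add_eq_vsub. rewrite vaddC. apply resolvent_eq. }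
  destruct (lin_scal lam w Dw) as [Dlw Alw].
  assert (DAw : D (A w)) by (rewrite HAw; apply lin_sub; assumption).
  rewrite <- (Hleft (A w) DAw). f_equal.
  unfold shift_op in *. rewrite <- Hw at 1.
  destruct (lin_sub _ _ Dlw DAw) as [_ ->]. rewrite Alw. reflexivity.
Qed.

Lemma resolvent_identity z : D z -> vscal lam (Rl z) = vadd z (Rl (A z)).
Proof. intro Dz. rewrite resolvent_commute by assumption. apply resolvent_eq. Qed.

Lemma resolvent_dom_pow m x : dom_pow E D A m x -> dom_pow E D A (S m) (Rl x).
Proof.
  revert x. induction m as [|m IH]; intros x Hx; cbn in *.
  - split; [apply (proj1 Hres)|trivial].
  - destruct Hx as [Dx Hx]. split; [apply (proj1 Hres)|].
    rewrite <- resolvent_commute by assumption. exact (IH _ Hx).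
Qed.

Lemma sn_resolvent_le p z :
  D z -> Cnorm lam * sn p (Rl z) <= sn p z + sn p (Rl (A z)).
Proof.
  intro Dz. rewrite <- sn_homog, resolvent_identity by assumption. apply sn_triangle.
Qed.

End Resolvent.

Lemma resolvent_orbit_bound p j z :
  dom_pow E D A j z ->
  exists a, 0 <= a /\ forall lam Rl, is_resolvent E D A lam Rl -> 1 <= Cnorm lam ->
    sn p (Rl z) <= a / Cnorm lam + (/ Cnorm lam) ^ j * sn p (Rl (Nat.iter j A z)).
Proof.
  revert z. induction j as [|j IH]; intros z Hz.
  - exists 0. split; [lra|]. intros lam Rl _ Ht. cbn. unfold Rdiv. lra.
  - destruct Hz as [Dz Hz]. destruct (IH (A z) Hz) as [a [Ha Hbound]].
    exists (sn p z + a). split; [pose proof (sn_nonneg E p z); lra|].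
    intros lam Rl HR Ht. rewrite Nat.iter_succ_r.
    specialize (Hbound lam Rl HR Ht).
    pose proof (sn_resolvent_le lam Rl HR p z Dz) as Hstep.
    set (t := Cnorm lam) in *.
    assert (Hu : 0 < / t <= 1).
    { split; [apply Rinv_0_lt_compat; lra|]. rewrite <- Rinv_1. apply Rinv_le_contravar; lra. }
    assert (Hs : sn p (Rl z) <= / t * (sn p z + sn p (Rl (A z)))).
    { apply (Rmult_le_reg_l t); [lra|]. rewrite <- Rmult_assoc, Rinv_r by lra. lra. }
    assert (Ha2 : / t * (a / t) <= a / t).
    { unfold Rdiv. pose proof (Rmult_le_pos _ _ Ha (Rlt_le _ _ (proj1 Hu))). nra. }
    cbn [pow]. unfold Rdiv in *. nra.
Qed.

End LinearOperator.

Lemma Rpower_neg_vanishes c e eps :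
  e < 0 -> 0 < eps -> exists M, 0 < M /\ forall t, M < t -> c * Rpower t e < eps.
Proof.
  intros He Heps. destruct (Rle_lt_dec c 0) as [Hc|Hc].
  - exists 1. split; [lra|]. intros t _.
    pose proof (exp_pos (e * ln t)). unfold Rpower. nra.
  - exists (exp (ln (eps / c) / e)). split; [apply exp_pos|]. intros t Ht.
    assert (Hlt : ln (eps / c) / e < ln t).
    { rewrite <- (ln_exp (ln (eps / c) / e)). apply ln_increasing; [apply exp_pos|exact Ht]. }
    assert (Hexp : Rpower t e < eps / c).
    { unfold Rpower. rewrite <- (exp_ln (eps / c)) by (apply Rdiv_lt_0_compat; lra).
      apply exp_increasing.
      replace (ln (eps / c)) with (e * (ln (eps / c) / e)) by (field; lra). nra. }
    apply (Rmult_lt_compat_l c) in Hexp; [|exact Hc].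
    replace (c * (eps / c)) with eps in Hexp by (field; lra). exact Hexp.
Qed.

Lemma inv_plus_Rpower_vanishes a b e eps :
  e < 0 -> 0 < eps -> exists M, 1 <= M /\ forall t, M < t -> a / t + b * Rpower t e < eps.
Proof.
  intros He Heps.
  destruct (Rpower_neg_vanishes a (-1) (eps / 2)) as [M1 [HM1 Ha]]; [lra|lra|].
  destruct (Rpower_neg_vanishes b e (eps / 2)) as [M2 [HM2 Hb]]; [lra|lra|].
  exists (Rmax 1 (Rmax M1 M2)). split; [apply Rmax_l|]. intros t Ht.
  pose proof (Rmax_r 1 (Rmax M1 M2)). pose proof (Rmax_l M1 M2). pose proof (Rmax_r M1 M2).
  assert (Hinv : a / t = a * Rpower t (-1)).
  { replace (-1) with (- (1)) by ring. rewrite Rpower_Ropp, Rpower_1 by lra. reflexivity. }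
  rewrite Hinv. specialize (Ha t ltac:(lra)). specialize (Hb t ltac:(lra)). lra.
Qed.

Lemma Rinv_pow_Rpower t j k : 0 < t -> (/ t) ^ j * Rpower t k = Rpower t (k - INR j).
Proof.
  intro Ht. unfold Rminus. rewrite Rpower_plus, Rpower_Ropp, Rpower_pow, pow_inv by exact Ht.
  ring.
Qed.

Lemma exists_nat_between k : -1 <= k -> exists J : nat, k < INR J <= k + 1.
Proof.
  intro Hk. destruct (archimed k) as [Hup1 Hup2].
  assert (Hup : (0 <= up k)%Z) by (assert (Hlt : (-1 < up k)%Z) by (apply lt_IZR; lra); lia).
  exists (Z.to_nat (up k)). rewrite INR_IZR_INZ, Z2Nat.id by exact Hup. lra.
Qed.

Lemma in_closure_of_limit (E : LCS) (S : E -> Prop) (x : E) (y : nat -> E) :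
  (forall n, S (y n)) ->
  (forall i eps, 0 < eps -> exists N, forall n, (N <= n)%nat -> sn i (vsub E x (y n)) < eps) ->
  in_closure E S x.
Proof.
  intros HS Hlim L eps Heps.
  assert (HL : exists N, forall n, (N <= n)%nat -> forall i, In i L -> sn i (vsub E x (y n)) < eps).
  { induction L as [|i L [N2 HN2]].
    - exists 0%nat. intros n _ i [].
    - destruct (Hlim i eps Heps) as [N1 HN1]. exists (Nat.max N1 N2).
      intros n Hn j [<-|Hj]; [apply HN1|apply HN2]; auto; lia. }
  destruct HL as [N HN]. exists (y N). split; [apply HS|]. apply HN. lia.
Qed.

Section ResolventEstimate.
Variable E : LCS.
Variable D : E -> Prop.
Variable A : E -> E.
Hypothesis HAlin : linear_op E D A.
Variable lam : nat -> Cx.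
Hypothesis Hinf : forall M : R, exists N, forall n, (N <= n)%nat -> M < Cnorm (lam n).
Variables C k : R.
Hypothesis Hest : forall p : SI E, exists q : SI E,
  forall (n : nat) (Rn : E -> E), is_resolvent E D A (lam n) Rn ->
    forall x : E, sn p (Rn x) <= C * Rpower (Cnorm (lam n)) k * sn q x.

Lemma resolvent_approximation J x :
  k < INR J -> dom_pow E D A (S J) x ->
  forall p eps, 0 < eps -> exists N, forall n Rn, (N <= n)%nat ->
    is_resolvent E D A (lam n) Rn -> sn p (vsub E x (vscal (lam n) (Rn x))) < eps.
Proof.
  intros HJ [Dx HAx] p eps Heps.
  destruct (Hest p) as [q Hq].
  destruct (resolvent_orbit_bound E D A HAlin p J (A x) HAx) as [a [_ Horbit]].
  set (b := C * sn q (Nat.iter J A (A x))).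
  destruct (inv_plus_Rpower_vanishes a b (k - INR J) eps) as [M [HM1 HM]]; [lra|exact Heps|].
  destruct (Hinf M) as [N HN]. exists N. intros n Rn Hn HR.
  specialize (HN n Hn). set (t := Cnorm (lam n)) in *.
  rewrite (resolvent_identity E D A HAlin (lam n) Rn HR x Dx), vsub_addr, sn_opp.
  eapply Rle_lt_trans; [apply (Horbit (lam n) Rn HR); fold t; lra|]. fold t.
  eapply Rle_lt_trans; [|apply (HM t HN)]. apply Rplus_le_compat_l.
  rewrite <- Rinv_pow_Rpower by lra.
  replace (b * ((/ t) ^ J * Rpower t k))
    with ((/ t) ^ J * (C * Rpower t k * sn q (Nat.iter J A (A x)))) by (unfold b; ring).
  apply Rmult_le_compat_l; [apply pow_le, Rlt_le, Rinv_0_lt_compat; lra|].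
  apply Hq, HR.
Qed.

Lemma stat_index_succ J :
  k < INR J -> (exists Rs : nat -> E -> E, forall n, is_resolvent E D A (lam n) (Rs n)) ->
  stat_index E D A (S J).
Proof.
  intros HJ [Rs HRs] m Hm x Hx.
  apply (in_closure_of_limit E _ x (fun n => vscal (lam n) (Rs n x))).
  - intro n. apply dom_pow_scal; [exact HAlin|].
    apply (resolvent_dom_pow E D A HAlin (lam n) _ (HRs n) m x Hx).
  - intros i eps Heps.
    destruct (resolvent_approximation J x HJ (dom_pow_antimono E D A _ _ x Hm Hx) i eps Heps)
      as [N HN].
    exists N. intros n Hn. apply HN; auto.
Qed.

End ResolventEstimate.

Theorem lemma2p4 (E : LCS) (D : E -> Prop) (A : E -> E)
  (HAlin : linear_op E D A) (HAcl : closed_op E D A)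
  (lam : nat -> Cx) (Hrho : forall n, in_resolvent_set E D A (lam n))
  (Hinf : forall M : R, exists N, forall n, (N <= n)%nat -> M < Cnorm (lam n))
  (C k : R) (HC : 0 < C) (Hk : -1 <= k)
  (Hest : forall p : SI E, exists q : SI E,
     forall (n : nat) (Rn : E -> E), is_resolvent E D A (lam n) Rn ->
       forall x : E, sn p (Rn x) <= C * Rpower (Cnorm (lam n)) k * sn q x) :
  stationary_dense E D A /\ n_le E D A (k + 2).
Proof.
  destruct (exists_nat_between k Hk) as [J [HkJ HJk]].
  assert (Hfamily : exists Rs : nat -> E -> E, forall n, is_resolvent E D A (lam n) (Rs n)).
  { apply (functional_choice (fun n Rn => is_resolvent E D A (lam n) Rn)).
    intro n. destruct (Hrho n) as [Rn [HR _]]. exists Rn. exact HR. }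
  pose proof (stat_index_succ E D A HAlin lam Hinf C k Hest J HkJ Hfamily) as Hstat.
  split; exists (S J); [exact Hstat|]. split; [exact Hstat|]. rewrite S_INR. lra.
Qed.
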